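(* Let $\delta_\ell=94/194$. Let $H$ be a $3$-regular graph on $n>4$ nodes every independent set of which has at most $\delta_\ell n$ nodes, and let $G$ be the complement of $H$ (an $(n-4)$-regular graph). Then $$\mathsf{OPT}(G)\le\frac{4\delta_\ell-1}{n-4},$$ where the maximum is over clusterings with any number of clusters.
   Context: For a finite simple undirected graph $G=(V,E)$ with $m=|E|\ge1$ edges, degrees $d_v$, and $a_{u,v}=1$ if $\{u,v\}\in E$ and $0$ otherwise: for $C\subseteq V$, $\mathsf M(C)=\frac{1}{2m}\sum_{u\in C}\sum_{v\in C}\big(a_{u,v}-\frac{d_ud_v}{2m}\big)$ (ordered pairs, including $u=v$). A clustering is a partition $\mathcal S$ of $V$ into nonempty clusters, with $\mathsf M(\mathcal S)=\sum_{C\in\mathcal S}\mathsf M(C)$; $\mathsf{OPT}(G)$ is the maximum of $\mathsf M(\mathcal S)$ over all clusterings. *)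

From HB Require Import structures.
From mathcomp Require Import all_boot all_order all_algebra.
Set Implicit Arguments. Unset Strict Implicit. Unset Printing Implicit Defensive.
Import Order.TTheory GRing.Theory Num.Theory.
Local Open Scope ring_scope.

Definition simple_graph (T : finType) (g : rel T) : Prop :=
  symmetric g /\ irreflexive g.

Definition deg (T : finType) (g : rel T) (v : T) : nat := #|[set u | g v u]|.

Definition edges (T : finType) (g : rel T) : {set {set T}} :=
  [set E : {set T} | [exists x, exists y, g x y && (E == [set x; y])]].

Definition nedges (T : finType) (g : rel T) : nat := #|edges g|.

Definition adj (T : finType) (g : rel T) (u v : T) : rat := (g u v)%:R.

Definition mod_cluster (T : finType) (g : rel T) (C : {set T}) : rat :=
  let m2 : rat := (2 * nedges g)%:R in
  m2^-1 * \sum_(u in C) \sum_(v in C)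
            (adj g u v - (deg g u)%:R * (deg g v)%:R / m2).

Definition modularity (T : finType) (g : rel T) (S : {set {set T}}) : rat :=
  \sum_(C in S) mod_cluster g C.

Definition clustering (T : finType) (S : {set {set T}}) : bool :=
  partition S [set: T].

Definition independent (T : finType) (g : rel T) (A : {set T}) : bool :=
  [forall x in A, forall y in A, ~~ g x y].

Definition compl_graph (T : finType) (g : rel T) : rel T :=
  fun x y => (x != y) && ~~ g x y.

Definition delta_l : rat := 94%:R / 194%:R.

(* Let C be a cluster with k vertices and let P count the ordered pairs of
   H-adjacent vertices of C. As G is (n-4)-regular, C contributes
   (4k^2/n - k - P) / (n(n-4)) to the modularity, so it suffices that
   4k^2 <= 4 delta k n + n P. The vertices of C preceding all their
   H-neighbours in C (in a fixed enumeration) are independent and number at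
   least k - P/2, whence 2k - P <= 2 delta n; the same holds for the
   complement of C, and 3-regularity links both counts through the cut.
   These linear constraints force the quadratic inequality whenever
   1/4 <= delta <= 1/2. *)
From HB Require Import structures.
From mathcomp Require Import all_boot all_order all_algebra.
From mathcomp Require Import ring lra.
Set Implicit Arguments. Unset Strict Implicit. Unset Printing Implicit Defensive.
Import Order.TTheory GRing.Theory Num.Theory.
Local Open Scope ring_scope.

Section Degrees.
Variables (T : finType) (g : rel T).

Lemma deg_sum (u : T) : deg g u = (\sum_v g u v)%N.
Proof.
rewrite /deg -sum1_card big_mkcond /=; apply: eq_bigr => v _.
by rewrite inE; case: (g u v).
Qed.

Lemma handshake : simple_graph g -> (2 * nedges g = \sum_v deg g v)%N.
Proof.
move=> [gsym girr].
have -> : (\sum_v deg g v = \sum_(p : T * T | g p.1 p.2) 1)%N.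
  under eq_bigr do rewrite deg_sum.
  rewrite pair_bigA /= [RHS]big_mkcond /=; apply: eq_bigr => p _.
  by case: (g p.1 p.2).
rewrite (partition_big (fun p => [set p.1; p.2]) (mem (edges g))); last first.
  move=> [a b] /= gab; rewrite inE; apply/existsP; exists a; apply/existsP.
  by exists b; rewrite gab eqxx.
rewrite /nedges mulnC -sum_nat_const; apply: eq_bigr => E.
rewrite inE => /existsP [x /existsP [y /andP [gxy /eqP ->]]].
have xy : x != y by apply: contraTneq gxy => ->; rewrite girr.
rewrite (eq_bigl (pred2 (x, y) (y, x))).
  by rewrite sum1_card card2 xpair_eqE (negbTE xy).
move=> [a b] /=; rewrite !xpair_eqE; apply/idP/idP.
  move=> /andP [gab /eqP e].
  have : a \in [set x; y] by rewrite -e set21.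
  have : b \in [set x; y] by rewrite -e set22.
  move=> /set2P [] eb /set2P [] ea; subst a b; rewrite ?eqxx ?orbT //.
  1-2: by rewrite girr in gab.
by move=> /orP [] /andP [/eqP -> /eqP ->]; rewrite ?gxy ?eqxx // gsym gxy setUC eqxx.
Qed.

Lemma deg_compl_graph (v : T) : irreflexive g ->
  (deg (compl_graph g) v + deg g v).+1 = #|T|.
Proof.
move=> girr; rewrite /deg.
have -> : [set u | compl_graph g v u] = ~: (v |: [set u | g v u]).
  by apply/setP => u; rewrite !inE /compl_graph negb_or eq_sym.
by rewrite -(cardsC (v |: [set u | g v u])) cardsU1 inE girr addnC.
Qed.

Lemma compl_graph_simple : simple_graph g -> simple_graph (compl_graph g).
Proof.
move=> [gsym girr]; split => [x y|x]; last by rewrite /compl_graph eqxx.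
by rewrite /compl_graph eq_sym gsym.
Qed.

Lemma mod_cluster_regular (d : nat) (C : {set T}) :
  simple_graph g -> (forall v, deg g v = d) ->
  mod_cluster g C = ((#|T| * d)%:R)^-1 *
    (\sum_(u in C) \sum_(v in C) adj g u v - #|C|%:R ^+ 2 * (d * d)%:R / (#|T| * d)%:R).
Proof.
move=> gsimple gd; rewrite /mod_cluster /=.
have -> : (2 * nedges g = #|T| * d)%N.
  by rewrite handshake // (eq_bigr (fun=> d)) ?sum_nat_const // => v _.
congr (_ * _).
pose c : rat := (d * d)%:R / (#|T| * d)%:R.
have row u : \sum_(v in C) (adj g u v - (deg g u)%:R * (deg g v)%:R / (#|T| * d)%:R)
             = \sum_(v in C) adj g u v - c *+ #|C|.
  rewrite sumrB; congr (_ - _).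
  by rewrite (eq_bigr (fun=> c)) ?sumr_const // => v _; rewrite !gd /c -natrM.
rewrite (eq_bigr _ (fun u _ => row u)) sumrB sumr_const -mulrnA; congr (_ - _).
by rewrite -[LHS]mulr_natl natrM -expr2 mulrA.
Qed.

Lemma modularity_le_card (c : rat) (S : {set {set T}}) : clustering S ->
  (forall C : {set T}, mod_cluster g C <= c * #|C|%:R) ->
  modularity g S <= c * #|T|%:R.
Proof.
move=> partS bound; rewrite /modularity -cardsT (card_partition partS) natr_sum.
by rewrite mulr_sumr; apply: ler_sum => C _.
Qed.

End Degrees.

Section Links.
Variables (T : finType) (h : rel T).
Hypotheses (hsym : symmetric h) (hirr : irreflexive h).

Definition link (A B : {set T}) : nat := \sum_(u in A) \sum_(v in B) h u v.

Lemma link_sym (A B : {set T}) : link A B = link B A.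
Proof.
rewrite /link exchange_big; apply: eq_bigr => u _.
by apply: eq_bigr => v _; rewrite hsym.
Qed.

Lemma sum_deg_link (C : {set T}) : (\sum_(u in C) deg h u = link C C + link C (~: C))%N.
Proof.
rewrite /link -big_split; apply: eq_bigr => u _.
rewrite deg_sum (bigID (mem C)) /=; congr (_ + _)%N.
by apply: eq_bigl => v; rewrite inE.
Qed.

Lemma card_compl_graph_pairs (C : {set T}) :
  ((\sum_(u in C) \sum_(v in C) compl_graph h u v) + #|C| + link C C = #|C| ^ 2)%N.
Proof.
have diag : #|C| = (\sum_(u in C) \sum_(v in C) (u == v))%N.
  rewrite -sum1_card; apply: eq_bigr => u uC.
  by rewrite (bigD1 u) //= eqxx big1 // => v /andP [_ /negbTE]; rewrite eq_sym => ->.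
have square : (#|C| ^ 2 = \sum_(u in C) \sum_(v in C) 1)%N.
  by rewrite -mulnn -sum_nat_const; apply: eq_bigr => u _; rewrite sum1_card.
rewrite square diag /link -!big_split; apply: eq_bigr => u _.
rewrite -!big_split; apply: eq_bigr => v _ /=.
rewrite /compl_graph; case: eqVneq => [->|_]; first by rewrite hirr.
by case: (h u v).
Qed.

Lemma sum_adj_compl_graph (C : {set T}) :
  \sum_(u in C) \sum_(v in C) adj (compl_graph h) u v
    = #|C|%:R ^+ 2 - #|C|%:R - (link C C)%:R.
Proof.
have /(congr1 (GRing.natmul (1 : rat))) := card_compl_graph_pairs C.
rewrite !natrD natrX natr_sum.
under eq_bigr do rewrite natr_sum.
rewrite /adj; lra.
Qed.

Definition down_links (A : {set T}) : nat :=
  \sum_(u in A) \sum_(v in A) (h u v && (enum_rank v < enum_rank u)%N).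

Lemma link_down_links (A : {set T}) : link A A = (down_links A).*2.
Proof.
rewrite -addnn {2}/down_links exchange_big /down_links -big_split.
apply: eq_bigr => u _; rewrite -big_split; apply: eq_bigr => v _ /=.
rewrite hsym; case huv: (h v u) => //=.
case: ltngtP => // /val_inj /enum_rank_inj euv.
by rewrite euv hirr in huv.
Qed.

Definition rank_minima (A : {set T}) : {set T} :=
  [set x in A | [forall y in A, h x y ==> (enum_rank x < enum_rank y)%N]].

Lemma rank_minima_independent (A : {set T}) : independent h (rank_minima A).
Proof.
apply/forall_inP => x xmin; apply/forall_inP => y ymin; apply/negP => hxy.
move: xmin ymin; rewrite !inE => /andP [xA /forall_inP xlow] /andP [yA /forall_inP ylow].
move: (xlow y yA) (ylow x xA); rewrite hxy hsym hxy /= => xy yx.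
by move: (ltn_trans xy yx); rewrite ltnn.
Qed.

Lemma card_le_rank_minima (A : {set T}) : (#|A| <= #|rank_minima A| + down_links A)%N.
Proof.
have minA : rank_minima A \subset A by apply/subsetP => x; rewrite inE => /andP [].
rewrite -(cardsID (rank_minima A) A) (setIidPr minA) leq_add2l.
rewrite /down_links (big_setID (rank_minima A)) /= -sum1_card.
apply: leq_trans (leq_addl _ _); apply: leq_sum => u.
rewrite !inE => /andP [umin uA]; move: umin; rewrite uA /= => /forall_inPn [y yA].
rewrite negb_imply -leqNgt => /andP [huy yu].
have yu' : (enum_rank y < enum_rank u)%N.
  rewrite ltn_neqAle yu andbT.
  by apply: contraTneq huy => /val_inj /enum_rank_inj ->; rewrite hirr.
by rewrite (bigD1 y) //= huy yu'.
Qed.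

Lemma independent_link_bound (A : {set T}) :
  (#|A|.*2 <= #|rank_minima A|.*2 + link A A)%N.
Proof. by rewrite link_down_links -doubleD leq_double card_le_rank_minima. Qed.

End Links.

(* The bound P >= 0, the independence bound for C, the one for its complement
   and Q >= 0 are binding in turn as k/(k+r) crosses delta, 1/2 and
   (1 + 2 delta)/2; in each regime the inequality factors. *)
Lemma cut_quadratic_bound (R : realFieldType) (delta k r P Q : R) :
  4^-1 <= delta <= 2^-1 -> 0 <= k -> 0 <= r -> 0 <= P -> 0 <= Q ->
  2 * k - P <= 2 * delta * (k + r) -> 2 * r - Q <= 2 * delta * (k + r) ->
  P + 3 * r = 3 * k + Q ->
  4 * k ^+ 2 <= 4 * delta * k * (k + r) + (k + r) * P.
Proof.
move=> /andP[d_lo d_hi] k0 r0 P0 Q0 indC indCc cut.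
have nP0 : 0 <= (k + r) * P by apply: mulr_ge0; lra.
have [k_small|k_big] := lerP k (delta * (k + r)).
  have : 0 <= k * (delta * (k + r) - k) by apply: mulr_ge0; lra.
  nra.
have [k_half|k_half] := lerP (2 * k) (k + r).
  have : 0 <= (k + r) * (P - (2 * k - 2 * delta * (k + r))) by apply: mulr_ge0; lra.
  have : 0 <= ((k + r) - 2 * k) * (2 * k - 2 * delta * (k + r)) by apply: mulr_ge0; lra.
  nra.
have [k_mid|k_mid] := lerP (2 * k) ((1 + 2 * delta) * (k + r)).
  have : 0 <= (k + r) * (P - (4 * k - (1 + 2 * delta) * (k + r))) by apply: mulr_ge0; lra.
  have : 0 <= (2 * k - (k + r)) * ((1 + 2 * delta) * (k + r) - 2 * k) by apply: mulr_ge0; lra.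
  nra.
have : 0 <= (k + r) * (P - (6 * k - 3 * (k + r))) by apply: mulr_ge0; lra.
have : 0 <= r * ((1 - 2 * delta) * (k + r) - 2 * r) by apply: mulr_ge0; lra.
have : 0 <= (4 * delta - 1) * (k + r) ^+ 2 by apply: mulr_ge0; [lra | exact: sqr_ge0].
nra.
Qed.

Section ThreeRegular.
Variables (T : finType) (h : rel T) (delta : rat).
Hypotheses (hsym : symmetric h) (hirr : irreflexive h).
Hypothesis h3 : forall v, deg h v = 3%N.
Hypothesis hind : forall A : {set T}, independent h A -> #|A|%:R <= delta * #|T|%:R.
Hypothesis delta_range : 4^-1 <= delta <= 2^-1.

Lemma link_independence_bound (A : {set T}) :
  2 * #|A|%:R - (link h A A)%:R <= 2 * delta * #|T|%:R.
Proof.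
have := hind (rank_minima_independent hsym A).
have : (#|A|.*2)%:R <= (#|rank_minima h A|.*2 + link h A A)%:R :> rat.
  by rewrite ler_nat independent_link_bound.
rewrite natrD -!muln2 !natrM; lra.
Qed.

Lemma link_cut_regular (A : {set T}) :
  (link h A A)%:R + (link h A (~: A))%:R = 3 * #|A|%:R :> rat.
Proof.
rewrite -natrD -sum_deg_link (eq_bigr (fun=> 3%N)) // sum_nat_const.
by rewrite natrM mulrC.
Qed.

Lemma cluster_link_bound (C : {set T}) :
  4 * #|C|%:R ^+ 2 <= 4 * delta * #|C|%:R * #|T|%:R + #|T|%:R * (link h C C)%:R.
Proof.
have cardT : #|T|%:R = #|C|%:R + #|~: C|%:R :> rat by rewrite -natrD cardsC.
have cutC := link_cut_regular C; have cutCc := link_cut_regular (~: C).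
rewrite setCK link_sym // in cutCc.
rewrite cardT; apply: (cut_quadratic_bound (Q := (link h (~: C) (~: C))%:R)) => //.
- by rewrite -cardT link_independence_bound.
- by rewrite -cardT link_independence_bound.
- lra.
Qed.

Lemma mod_cluster_compl_bound : (4 < #|T|)%N -> forall C : {set T},
  mod_cluster (compl_graph h) C <= (4 * delta - 1) / (#|T|%:R * (#|T|%:R - 4)) * #|C|%:R.
Proof.
move=> n_gt4 C; set d := (#|T| - 4)%N.
have deg_compl v : deg (compl_graph h) v = d.
  by rewrite /d -(deg_compl_graph v hirr) h3 -addnS addnK.
rewrite (mod_cluster_regular C (compl_graph_simple (conj hsym hirr)) deg_compl).
rewrite sum_adj_compl_graph //.
have d_eq : d%:R = #|T|%:R - 4 :> rat by rewrite /d natrB 1?ltnW.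
have := cluster_link_bound C.
rewrite !natrM d_eq; set n := #|T|%:R; set k := #|C|%:R; set P := (link h C C)%:R.
have n_gt4' : 4 < n by rewrite /n ltr_nat.
have nD : n * (n - 4) != 0 by rewrite mulf_neq0 // gt_eqF //; lra.
move=> key.
have -> : (n * (n - 4))^-1 * (k ^+ 2 - k - P - k ^+ 2 * ((n - 4) * (n - 4)) / (n * (n - 4)))
    = (4 * delta - 1) / (n * (n - 4)) * k
      + (4 * k ^+ 2 - (4 * delta * k * n + n * P)) / (n ^+ 2 * (n - 4)).
  by field; apply/andP; split; rewrite gt_eqF //; lra.
rewrite gerDl; apply: mulr_le0_ge0; first by rewrite subr_le0.
by rewrite invr_ge0 mulr_ge0 ?sqr_ge0 // subr_ge0 ltW.
Qed.

Lemma modularity_compl_bound : (4 < #|T|)%N -> forall S : {set {set T}}, clustering S ->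
  modularity (compl_graph h) S <= (4 * delta - 1) / (#|T|%:R - 4).
Proof.
move=> n_gt4 S partS.
apply: le_trans (modularity_le_card partS (mod_cluster_compl_bound n_gt4)) _.
have n_neq0 : #|T|%:R != 0 :> rat by rewrite pnatr_eq0 -lt0n (ltn_trans _ n_gt4).
by rewrite invfM mulrA mulrAC divfK.
Qed.

End ThreeRegular.

Theorem mainTheorem9 (T : finType) (h : rel T) :
  simple_graph h ->
  (forall v : T, deg h v = 3%N) ->
  (4 < #|T|)%N ->
  (forall A : {set T}, independent h A -> (#|A|%:R : rat) <= delta_l * #|T|%:R) ->
  forall S : {set {set T}}, clustering S ->
    modularity (compl_graph h) S <= (4%:R * delta_l - 1) / (#|T|%:R - 4%:R).
Proof.
move=> [hsym hirr] h3 n_gt4 hind.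
have delta_range : 4^-1 <= delta_l <= 2^-1 by [].
exact: modularity_compl_bound.
Qed.
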